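(* Let $H$ be an admissible Hamiltonian with vector field $f$, and let $g$ be associated to $f$ via $B$. Define $$\Pi(x)=J(x)-\varepsilon^2\,J(x)\,\mathcal H\,J(x)\,\mathcal H\,J(x).$$ Then $\Pi$ is a Poisson tensor on $\mathbb R^{2n}$ (i.e. the bracket $\{F,G\}_\Pi=(\nabla F)^T\Pi(x)\nabla G$ is skew-symmetric and satisfies the Jacobi identity), and both maps $\Phi_f(\cdot,\varepsilon)$ and $\Phi_g(\cdot,\varepsilon)$ are Poisson with respect to it: $d\Phi_f(x)\,\Pi(x)\,d\Phi_f(x)^T=\Pi(\Phi_f(x,\varepsilon))$ and $d\Phi_g(x)\,\Pi(x)\,d\Phi_g(x)^T=\Pi(\Phi_g(x,\varepsilon))$ wherever defined.
   Context: Fix an integer $n\ge 2$. Points of $\mathbb R^{2n}$ are $x=(x_1,\dots,x_{2n})^{T}$; write $u=(x_1,\dots,x_n)^T$. Let $X(u)$ be the $n\times n$ matrix with entries $X(u)_{ij}=x_{k}$ where $k\in\{1,\dots,n\}$, $k\equiv i+j-1 \pmod n$, and let $J(x)=\begin{pmatrix}0&X(u)\\-X(u)&0\end{pmatrix}$ (a skew-symmetric $2n\times 2n$ matrix depending linearly on $x$). Let $\mathcal P$ be the $n\times n$ cyclic shift matrix ($\mathcal P_{i,i+1}=1$ for $1\le i\le n-1$, $\mathcal P_{n,1}=1$, all other entries $0$) and $A=\begin{pmatrix}\mathcal P&0\\0&\mathcal P\end{pmatrix}$. An admissible Hamiltonian is a homogeneous quadratic form $H(x)=\tfrac12 x^T\mathcal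 H x$ with a constant symmetric matrix $\mathcal H=\nabla^2H$ satisfying $A\mathcal H=\mathcal H A^T$; its Hamiltonian vector field is $f(x)=J(x)\nabla H(x)$ and $f'(x)$ denotes the Jacobi matrix of $f$. Kahan map: for a vector field $f$ whose components are homogeneous quadratic polynomials and a parameter $\varepsilon$, the Kahan map is $\Phi_f(x,\varepsilon)=(I-\varepsilon f'(x))^{-1}x$ (defined wherever $I-\varepsilon f'(x)$ is invertible); it is the solution $\tilde x$ of $\frac{\tilde x-x}{2\varepsilon}=2f(\frac{x+\tilde x}{2})-\frac12f(x)-\frac12 f(\tilde x)$; $d\Phi_f(x)$ denotes its Jacobi matrix with respect to $x$. Associated vector fields: let $B=\sum_{i=0}^{n-1}\alpha_iA^i$ with $\alpha_i\in\mathbb C$ and $B^2=I$. If $H$ is an admissible Hamiltonian with vector field $f$, put $K(x)=\tfrac12 x^T B\mathcal H x$ (so $\nabla K=B\nabla H$) and $g(x)=J(x)\nabla K(x)=B^Tf(x)$; $g$ is said to be associated to $f$ via $B$. (When $B$ is complex, everything is considered over $\mathbb C^{2n}$.) *)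

From HB Require Import structures.
From mathcomp Require Import all_boot all_order all_algebra.
Set Implicit Arguments. Unset Strict Implicit. Unset Printing Implicit Defensive.
Import Order.TTheory GRing.Theory Num.Theory.
Local Open Scope ring_scope.

Section Defs.
Variable R : numFieldType.

Definition ordmod n (i j : 'I_n) : 'I_n :=
  Ordinal (@ltn_pmod (i + j)%N n (leq_ltn_trans (leq0n i) (ltn_ord i))).

(* X(u)_{ij} = x_k, k = i+j-1 mod n (1-indexed)  <=>  x_{(i+j) mod n} (0-indexed) *)
Definition Xmat n (x : 'cV[R]_(n + n)) : 'M[R]_n :=
  \matrix_(i < n, j < n) x (lshift n (ordmod i j)) 0.

Definition Jmat n (x : 'cV[R]_(n + n)) : 'M[R]_(n + n) :=
  block_mx 0 (Xmat x) (- Xmat x) 0.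

(* cyclic shift: P_{i,i+1} = 1, P_{n,1} = 1 (1-indexed) *)
Definition Pshift n : 'M[R]_n := \matrix_(i < n, j < n) ((j : nat) == (i.+1 %% n)%N)%:R.

Definition Amat n : 'M[R]_(n + n) := block_mx (Pshift n) 0 0 (Pshift n).

Definition mxpow m (M : 'M[R]_m) (k : nat) : 'M[R]_m := iter k (mulmx M) 1%:M.

(* Hamiltonian vector field f(x) = J(x) grad H(x), grad H(x) = Hc x *)
Definition hamvf n (Hc : 'M[R]_(n + n)) (x : 'cV[R]_(n + n)) : 'cV[R]_(n + n) :=
  Jmat x *m (Hc *m x).

(* associated vector field g(x) = J(x) grad K(x), grad K(x) = B Hc x *)
Definition assocvf n (B Hc : 'M[R]_(n + n)) (x : 'cV[R]_(n + n)) : 'cV[R]_(n + n) :=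
  Jmat x *m (B *m (Hc *m x)).

Definition PiT n (eps : R) (Hc : 'M[R]_(n + n)) (x : 'cV[R]_(n + n)) : 'M[R]_(n + n) :=
  Jmat x - eps ^+ 2 *: (Jmat x *m Hc *m Jmat x *m Hc *m Jmat x).

Definition evec m (l : 'I_m) : 'cV[R]_m := delta_mx l 0.

(* Jacobi matrix of a homogeneous quadratic vector field f, by polarization:
   column j of f'(x) is f'(x) e_j = f(x + e_j) - f(x) - f(e_j). *)
Definition qjac m (f : 'cV[R]_m -> 'cV[R]_m) (x : 'cV[R]_m) : 'M[R]_m :=
  \matrix_(i < m, j < m) (f (x + evec j) - f x - f (evec j)) i 0.

Definition kahan m (f : 'cV[R]_m -> 'cV[R]_m) (eps : R) (x : 'cV[R]_m) : 'cV[R]_m :=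
  invmx (1%:M - eps *: qjac f x) *m x.

Definition kahan_defined m (f : 'cV[R]_m -> 'cV[R]_m) (eps : R) (x : 'cV[R]_m) : bool :=
  (1%:M - eps *: qjac f x) \in unitmx.

Definition vnorm m (v : 'cV[R]_m) : R := \sum_i `|v i 0|.

Definition is_jacobian m (F : 'cV[R]_m -> 'cV[R]_m) (x : 'cV[R]_m) (D : 'M[R]_m) : Prop :=
  forall e : R, 0 < e -> exists2 d : R, 0 < d &
    forall h : 'cV[R]_m, vnorm h < d ->
      vnorm (F (x + h) - F x - D *m h) <= e * vnorm h.

Definition has_pderiv m (phi : 'cV[R]_m -> R) (x : 'cV[R]_m) (l : 'I_m) (d : R) : Prop :=
  forall e : R, 0 < e -> exists2 dl : R, 0 < dl &
    forall t : R, `|t| < dl ->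
      `|phi (x + t *: evec l) - phi x - t * d| <= e * `|t|.

Definition poisson_tensor m (Pi : 'cV[R]_m -> 'M[R]_m) : Prop :=
  (forall x, (Pi x)^T = - Pi x) /\
  (forall x, exists dP : 'I_m -> 'I_m -> 'I_m -> R,
     (forall l j k, has_pderiv (fun y => Pi y j k) x l (dP l j k)) /\
     (forall i j k, \sum_(l < m) (Pi x i l * dP l j k + Pi x j l * dP l k i
                                  + Pi x k l * dP l i j) = 0)).

Definition poisson_map m (Pi : 'cV[R]_m -> 'M[R]_m) (F : 'cV[R]_m -> 'cV[R]_m)
  (dom : 'cV[R]_m -> bool) : Prop :=
  forall x, dom x -> exists D : 'M[R]_m,
    is_jacobian F x D /\ D *m Pi x *m D^T = Pi (F x).

End Defs.

From HB Require Import structures.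
From mathcomp Require Import all_boot all_order all_algebra.
From mathcomp Require Import ring.
Set Implicit Arguments. Unset Strict Implicit. Unset Printing Implicit Defensive.
Import Order.TTheory GRing.Theory Num.Theory.
Local Open Scope ring_scope.

(* Read each half of x = (u, v) as an element of the group algebra R[Z/n], whose
   product is multiplication by circulant matrices and whose antipode w^* reverses the
   indices.  Then X(u) h = u h^*, so J(x) only depends on u; an admissible Hc is a 2x2
   block of Hankel matrices X(a), X(b), X(c); and Pi(x) = J(phi(u)) with
   phi(u) = u + eps^2 (a^* c^* - b^*^2) u^3, for which the Jacobi identity reduces to an
   equality of convolutions.
   The Jacobi matrix f'(x) is a 2x2 block of circulants, hence so is the derivative
   D = (I - eps f'(x))^-1 (I + eps f'(x~)) of the Kahan map (valid for any quadratic
   field, by a contraction estimate), and D J(w) D^T = J(det D * w) with the determinant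
   taken over the group algebra.  The Poisson property thus becomes the identity
   det (I + eps f'(x~)) phi(u) = det (I - eps f'(x)) phi(u~) in a commutative ring,
   which follows from the Kahan equations.  Finally B is a block diagonal circulant
   with B^2 = I, so g is the Hamiltonian field of B Hc, whose Pi is that of Hc. *)

Lemma mulmx_colP (R : pzRingType) k l (A B : 'M[R]_(k, l)) :
  (forall h : 'cV[R]_l, A *m h = B *m h) -> A = B.
Proof.
move=> eqAB; apply/matrixP => i j.
by have /(congr1 (fun M : 'cV_k => M i 0)) := eqAB (delta_mx j 0); rewrite -!colE !mxE.
Qed.

Section GroupAlgebra.
Variables (R : numFieldType) (m : nat).
Local Notation n := m.+2.

Definition gralg := 'cV[R]_n.
HB.instance Definition _ := GRing.Zmodule.on gralg.

Definition circ (y : gralg) : 'M[R]_n := \matrix_(i, j) y (i - j) 0.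
Definition hankel (y : gralg) : 'M[R]_n := \matrix_(i, j) y (i + j) 0.
Definition antipode (y : gralg) : gralg := \col_i y (- i) 0.

Lemma circE y i j : circ y i j = y (i - j) 0. Proof. by rewrite mxE. Qed.
Lemma hankelE y i j : hankel y i j = y (i + j) 0. Proof. by rewrite mxE. Qed.
Lemma antipodeE y i j : antipode y i j = y (- i) 0. Proof. by rewrite mxE. Qed.

Lemma circ_mulC (y z : gralg) : circ y *m z = circ z *m y.
Proof.
apply/matrixP => i k; rewrite [k]ord1 !(mxE, circE).
rewrite (reindex_inj (@inv_inj _ (fun j => i - j) (subKr i))) /=.
by apply: eq_bigr => j _; rewrite !circE subKr mulrC.
Qed.

Lemma circ_mul (y z : gralg) : circ (circ y *m z) = circ y *m circ z.
Proof.
apply/matrixP => i k; rewrite !(mxE, circE) [RHS](reindex_inj (addIr k)) /=.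
by apply: eq_bigr => j _; rewrite !circE addrK opprD addrA [_ - j]addrAC.
Qed.

Lemma circD (y z : gralg) : circ (y + z) = circ y + circ z.
Proof. by apply/matrixP => i j; rewrite !(mxE, circE). Qed.

Lemma circZ a (y : gralg) : circ (a *: y) = a *: circ y.
Proof. by apply/matrixP => i j; rewrite !(mxE, circE). Qed.

Lemma circ0 : circ 0 = 0.
Proof. by apply/matrixP => i j; rewrite !(mxE, circE). Qed.

Lemma circN (y : gralg) : circ (- y) = - circ y.
Proof. by apply/matrixP => i j; rewrite !(mxE, circE). Qed.

Definition gunit : gralg := delta_mx 0 0.

Lemma circ_gunit : circ gunit = 1%:M.
Proof. by apply/matrixP => i j; rewrite !(mxE, circE) subr_eq0 andbT. Qed.

Lemma circ_mul_gunit y : circ y *m gunit = y.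
Proof.
apply/matrixP => i j; rewrite ord1 !mxE (bigD1 0) //= big1 => [|k /negPf k0];
  by rewrite !(mxE, circE) ?k0 ?subr0 ?mulr1 ?addr0 ?mulr0.
Qed.

Lemma gunit_neq0 : gunit != 0.
Proof. by apply/eqP => /matrixP /(_ 0 0); rewrite !mxE eqxx => /eqP; rewrite oner_eq0. Qed.

Definition gmul (y z : gralg) : gralg := circ y *m z.

Lemma gmulA : associative gmul.
Proof. by move=> x y z; rewrite /gmul circ_mul mulmxA. Qed.
Lemma gmulC : commutative gmul.
Proof. by move=> x y; rewrite /gmul circ_mulC. Qed.
Lemma gmul1 : left_id gunit gmul.
Proof. by move=> x; rewrite /gmul circ_gunit mul1mx. Qed.
Lemma gmulDl : left_distributive gmul +%R.
Proof. by move=> x y z; rewrite /gmul circD mulmxDl. Qed.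

HB.instance Definition _ :=
  GRing.Zmodule_isComNzRing.Build gralg gmulA gmulC gmul1 gmulDl gunit_neq0.

Lemma gralg_mulE (y z : gralg) : y * z = circ y *m z. Proof. by []. Qed.

Lemma circ1 : circ 1 = 1%:M. Proof. exact: circ_gunit. Qed.

Lemma circM (y z : gralg) : circ (y * z) = circ y *m circ z.
Proof. exact: circ_mul. Qed.

Definition gscalar (r : R) : gralg := r *: (1 : gralg).

Lemma scale_gralg r (y : gralg) : (r *: (y : 'cV_n) : gralg) = gscalar r * y.
Proof. by rewrite gralg_mulE circZ circ1 -scalemxAl mul1mx. Qed.

Lemma gscalarM r s : gscalar (r * s) = gscalar r * gscalar s.
Proof. by rewrite -scale_gralg /gscalar scalerA. Qed.

Lemma scale_circ r (y : gralg) : r *: circ y = circ (gscalar r * y).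
Proof. by rewrite -circZ scale_gralg. Qed.

Lemma antipodeK (y : gralg) : antipode (antipode y) = y.
Proof. by apply/matrixP => i j; rewrite [j]ord1 !antipodeE opprK. Qed.
Lemma antipodeD (y z : gralg) : antipode (y + z) = antipode y + antipode z.
Proof. by apply/matrixP => i j; rewrite !(mxE, antipodeE). Qed.
Lemma antipodeN (y : gralg) : antipode (- y) = - antipode y.
Proof. by apply/matrixP => i j; rewrite !(mxE, antipodeE). Qed.
Lemma antipode1 : antipode 1 = 1.
Proof. by apply/matrixP => i j; rewrite [j]ord1 !(mxE, antipodeE) oppr_eq0. Qed.
Lemma antipodeM (y z : gralg) : antipode (y * z) = antipode y * antipode z.
Proof.
rewrite !gralg_mulE; apply/matrixP => i k; rewrite [k]ord1 !(mxE, circE, antipodeE).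
rewrite [RHS](reindex_inj oppr_inj) /=.
by apply: eq_bigr => j _; rewrite !(circE, antipodeE) !opprK opprD.
Qed.

Lemma tr_circ (y : gralg) : (circ y)^T = circ (antipode y).
Proof. by apply/matrixP => i j; rewrite !(mxE, antipodeE) opprB. Qed.
Lemma tr_hankel (y : gralg) : (hankel y)^T = hankel y.
Proof. by apply/matrixP => i j; rewrite !mxE addrC. Qed.

Lemma hankelD (y z : gralg) : hankel (y + z) = hankel y + hankel z.
Proof. by apply/matrixP => i j; rewrite !mxE. Qed.
Lemma hankel_gscalar r (y : gralg) : hankel (gscalar r * y) = r *: hankel y.
Proof. by apply/matrixP => i j; rewrite -scale_gralg !mxE. Qed.

Lemma mul_hankel (w y : gralg) : hankel w *m y = w * antipode y.
Proof.
rewrite gralg_mulE; apply/matrixP => i k; rewrite [k]ord1 !(mxE, circE, antipodeE).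
rewrite [RHS](reindex_inj oppr_inj) /=.
by apply: eq_bigr => j _; rewrite !(hankelE, circE, antipodeE) !opprK.
Qed.

Lemma circ_mul_hankel (y w : gralg) : circ y *m hankel w = hankel (y * w).
Proof. by apply: mulmx_colP => h; rewrite -mulmxA !mul_hankel -gralg_mulE mulrA. Qed.

End GroupAlgebra.

(* [ring] only finds the group-algebra product once the goal is retyped in [gralg]. *)
Ltac gralg_ring R m :=
  match goal with |- @eq _ ?a ?b => change (@eq (gralg R m) a b) end; ring.

Section Blocks.
Variables (R : numFieldType) (m : nat).
Local Notation n := m.+2.
Local Notation G := (gralg R m).
Local Notation gscalar := (@gscalar R m).
Implicit Types (a b c u v w : G).

Definition skewJ w : 'M[R]_(n + n) := block_mx 0 (hankel w) (- hankel w) 0.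

Lemma JmatE (x : 'cV[R]_(n + n)) : Jmat x = skewJ (usubmx x).
Proof.
by congr block_mx; [|congr (- _)]; apply/matrixP => i j; rewrite !mxE; congr (x _ 0);
  apply: val_inj.
Qed.

Lemma tr_skewJ w : (skewJ w)^T = - skewJ w.
Proof. by rewrite tr_block_mx !trmx0 tr_hankel linearN /= tr_hankel opp_block_mx !oppr0 opprK. Qed.

Lemma mul_skewJ w h1 h2 :
  skewJ w *m col_mx h1 h2 = col_mx (w * antipode h2) (- (w * antipode h1)).
Proof. by rewrite mul_block_col !mul0mx add0r addr0 mulNmx !mul_hankel. Qed.

Lemma skewJD w1 w2 : skewJ (w1 + w2) = skewJ w1 + skewJ w2.
Proof. by rewrite /skewJ add_block_mx hankelD opprD !addr0. Qed.

Lemma skewJ_gscalar r w : skewJ (gscalar r * w) = r *: skewJ w.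
Proof. by rewrite /skewJ scale_block_mx hankel_gscalar !scaler0 scalerN. Qed.

Lemma skewJ0 : skewJ 0 = 0.
Proof. by rewrite -(mul0r 0) -[0 in LHS](scale0r (1 : G)) skewJ_gscalar scale0r. Qed.

Definition hblock a b c : 'M[R]_(n + n) :=
  block_mx (hankel a) (hankel b) (hankel b) (hankel c).

Lemma mul_hblock a b c h1 h2 :
  hblock a b c *m col_mx h1 h2 =
  col_mx (a * antipode h1 + b * antipode h2) (b * antipode h1 + c * antipode h2).
Proof. by rewrite mul_block_col !mul_hankel. Qed.

Lemma col_mx_eq u v u' v' : u = u' -> v = v' -> col_mx u v = col_mx u' v' :> 'cV[R]_(n + n).
Proof. by move=> -> ->. Qed.

Lemma hamvf_hblock a b c u v :
  hamvf (hblock a b c) (col_mx u v) =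
  col_mx (u * (antipode b * u + antipode c * v)) (- (u * (antipode a * u + antipode b * v))).
Proof.
rewrite /hamvf mul_hblock JmatE col_mxKu mul_skewJ.
by apply: col_mx_eq; rewrite !(antipodeD, antipodeM, antipodeK).
Qed.

Definition cblock (l11 l12 l21 l22 : G) : 'M[R]_(n + n) :=
  block_mx (circ l11) (circ l12) (circ l21) (circ l22).

Lemma mul_cblock (l11 l12 l21 l22 h1 h2 : G) :
  cblock l11 l12 l21 l22 *m col_mx h1 h2 = col_mx (l11 * h1 + l12 * h2) (l21 * h1 + l22 * h2).
Proof. exact: mul_block_col. Qed.

Lemma tr_cblock (l11 l12 l21 l22 : G) :
  (cblock l11 l12 l21 l22)^T =
  cblock (antipode l11) (antipode l21) (antipode l12) (antipode l22).
Proof. by rewrite tr_block_mx !tr_circ. Qed.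

Lemma cblock_skewJ (l11 l12 l21 l22 w : G) :
  cblock l11 l12 l21 l22 *m skewJ w *m (cblock l11 l12 l21 l22)^T =
  skewJ ((l11 * l22 - l12 * l21) * w).
Proof.
apply: mulmx_colP => h; rewrite -!mulmxA tr_cblock -[h]vsubmxK mul_cblock !mul_skewJ mul_cblock.
by apply: col_mx_eq; rewrite !(antipodeD, antipodeM, antipodeK, antipodeN); gralg_ring R m.
Qed.

Lemma scalar_sub_cblock eps (k11 k12 k21 k22 : G) :
  1%:M - eps *: cblock k11 k12 k21 k22 =
  cblock (1 - gscalar eps * k11) (- (gscalar eps * k12))
         (- (gscalar eps * k21)) (1 - gscalar eps * k22).
Proof.
rewrite (scalar_mx_block n n) scale_block_mx !scale_circ opp_block_mx add_block_mx.
by rewrite -!circN -circ1 -circ0 -!circD !add0r.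
Qed.

Lemma scalar_add_cblock eps (k11 k12 k21 k22 : G) :
  1%:M + eps *: cblock k11 k12 k21 k22 =
  cblock (1 + gscalar eps * k11) (gscalar eps * k12)
         (gscalar eps * k21) (1 + gscalar eps * k22).
Proof.
rewrite (scalar_mx_block n n) scale_block_mx !scale_circ add_block_mx.
by rewrite -circ1 -circ0 -!circD !add0r.
Qed.

(* The Jacobi matrix of the Hamiltonian field of [hblock a b c], with [a' = antipode a] etc. *)
Definition hamjac a' b' c' (x : 'cV[R]_(n + n)) : 'M[R]_(n + n) :=
  cblock (2 * b' * usubmx x + c' * dsubmx x) (c' * usubmx x)
    (- (2 * a' * usubmx x + b' * dsubmx x)) (- (b' * usubmx x)).

Lemma hamvf_polar a b c (x h : 'cV[R]_(n + n)) :
  hamvf (hblock a b c) (x + h) - hamvf (hblock a b c) x - hamvf (hblock a b c) h =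
  hamjac (antipode a) (antipode b) (antipode c) x *m h.
Proof.
rewrite -[x]vsubmxK -[h]vsubmxK add_col_mx !hamvf_hblock /hamjac !(col_mxKu, col_mxKd).
by rewrite mul_cblock !opp_col_mx !add_col_mx; apply: col_mx_eq; gralg_ring R m.
Qed.

Lemma qjac_hblock a b c (x : 'cV[R]_(n + n)) :
  qjac (hamvf (hblock a b c)) x = hamjac (antipode a) (antipode b) (antipode c) x.
Proof. by apply/matrixP => i j; rewrite mxE hamvf_polar /evec -colE mxE. Qed.

Lemma qjac_hblock_sym a b c (y z : 'cV[R]_(n + n)) :
  qjac (hamvf (hblock a b c)) y *m z = qjac (hamvf (hblock a b c)) z *m y.
Proof. by rewrite !qjac_hblock -!hamvf_polar [z + y]addrC addrAC. Qed.

Definition hdisc a b c : G := antipode a * antipode c - antipode b ^+ 2.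

Definition pi_coeff (eps : R) a b c u : G := u + gscalar (eps ^+ 2) * hdisc a b c * u ^+ 3.

Lemma PiT_hblock eps a b c (x : 'cV[R]_(n + n)) :
  PiT eps (hblock a b c) x = skewJ (pi_coeff eps a b c (usubmx x)).
Proof.
apply: mulmx_colP => h; rewrite /PiT JmatE mulmxBl -scalemxAl -!mulmxA.
rewrite -[h]vsubmxK !(mul_skewJ, mul_hblock) scale_col_mx opp_col_mx add_col_mx.
rewrite !scale_gralg /pi_coeff /hdisc.
by apply: col_mx_eq; rewrite !(antipodeD, antipodeM, antipodeK, antipodeN); gralg_ring R m.
Qed.

End Blocks.

Section KahanIdentity.
Variable T : comNzRingType.

Lemma eq_by_lincomb (A B c1 c2 p1 p2 : T) :
  p1 = 0 -> p2 = 0 -> A - B = c1 * p1 + c2 * p2 -> A = B.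
Proof. by move=> -> -> /eqP; rewrite !mulr0 addr0 subr_eq0 => /eqP. Qed.

(* With [E = eps], [M = 1 - E K(u,v)] and [N = 1 + E K(ut,vt)] for the block
   Jacobian [K] of [hamjac], the hypotheses are the Kahan equation [M (ut,vt) = (u,v)];
   the conclusion is [det N * pi_coeff u = det M * pi_coeff ut]. *)
Lemma kahan_det_identity (E a b c u v ut vt : T) :
  let D := a * c - b * b in
  let m11 := 1 - E * (2 * b * u + c * v) in
  let m12 := - (E * (c * u)) in
  let m21 := - (E * (- (2 * a * u + b * v))) in
  let m22 := 1 - E * (- (b * u)) in
  let n11 := 1 + E * (2 * b * ut + c * vt) in
  let n12 := E * (c * ut) in
  let n21 := E * (- (2 * a * ut + b * vt)) in
  let n22 := 1 + E * (- (b * ut)) in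
  m11 * ut + m12 * vt = u -> m21 * ut + m22 * vt = v ->
  (n11 * n22 - n12 * n21) * (u + E * E * D * (u * u * u)) =
  (m11 * m22 - m12 * m21) * (ut + E * E * D * (ut * ut * ut)).
Proof.
move=> D m11 m12 m21 m22 n11 n12 n21 n22 r1 r2.
have {}r1 : m11 * ut + m12 * vt - u = 0 by rewrite r1 subrr.
have {}r2 : m21 * ut + m22 * vt - v = 0 by rewrite r2 subrr.
set s := b * ut + c * vt; set t := b * u + c * v.
have detM : ut * (m11 * m22 - m12 * m21) = u * (1 + E * t).
  by apply: (eq_by_lincomb (c1 := m22) (c2 := - m12) r1 r2); rewrite /m11 /m12 /m21 /m22 /t; ring.
have detN : u * (n11 * n22 - n12 * n21) = ut * (1 - E * s).
  by apply: (eq_by_lincomb (c1 := - n22) (c2 := n12) r1 r2);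
    rewrite /n11 /n12 /n21 /n22 /m11 /m12 /m21 /m22 /s; ring.
have r3 : ut - u - E * (u * s + ut * t) = 0.
  by apply: (eq_by_lincomb (c1 := 1) (c2 := 0) r1 r2); rewrite /m11 /m12 /m21 /m22 /s /t; ring.
have r4 : s - t + 2 * E * D * u * ut = 0.
  by apply: (eq_by_lincomb (c1 := b) (c2 := c) r1 r2); rewrite /m11 /m12 /m21 /m22 /s /t /D; ring.
apply: (eq_by_lincomb (c1 := 1 + E * E * D * u * ut) (c2 := E * (u - ut)) r3 r4).
transitivity ((1 + E * E * D * (u * u)) * (u * (n11 * n22 - n12 * n21))
  - (1 + E * E * D * (ut * ut)) * (ut * (m11 * m22 - m12 * m21))); first by ring.
by rewrite detM detN /s /t; ring.
Qed.

End KahanIdentity.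

Section KahanPoisson.
Variables (R : numFieldType) (m : nat).
Local Notation n := m.+2.
Local Notation G := (gralg R m).
Local Notation gscalar := (@gscalar R m).

Lemma kahan_hblock_poisson eps (a b c : G) (x : 'cV[R]_(n + n)) :
  let M := 1%:M - eps *: qjac (hamvf (hblock a b c)) x in
  M \in unitmx ->
  let xt := invmx M *m x in
  let D := invmx M *m (1%:M + eps *: qjac (hamvf (hblock a b c)) xt) in
  D *m PiT eps (hblock a b c) x *m D^T = PiT eps (hblock a b c) xt.
Proof.
move=> M uM xt D.
have Mxt : M *m xt = x by rewrite /xt mulKVmx.
rewrite /D; clearbody xt; move: uM Mxt.
rewrite /M !qjac_hblock /hamjac scalar_sub_cblock scalar_add_cblock !PiT_hblock.
set W := invmx _; set Mb := cblock _ _ _ _ => uM Mxt.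
have WM : W *m Mb = 1%:M by rewrite mulVmx.
rewrite -[xt in Mb *m xt]vsubmxK mul_cblock -[x in _ = x]vsubmxK in Mxt.
case/eq_col_mx: Mxt => r1 r2.
have pi_coeffE y : pi_coeff eps a b c y =
    y + gscalar eps * gscalar eps * hdisc a b c * (y * y * y).
  by rewrite /pi_coeff -gscalarM -expr2; gralg_ring R m.
rewrite trmx_mul; set Nb := cblock _ _ _ _.
have -> : W *m Nb *m skewJ (pi_coeff eps a b c (usubmx x)) *m (Nb^T *m W^T) =
          W *m (Nb *m skewJ (pi_coeff eps a b c (usubmx x)) *m Nb^T) *m W^T.
  by rewrite !mulmxA.
rewrite /Nb cblock_skewJ !pi_coeffE /hdisc expr2.
rewrite (@kahan_det_identity G _ _ _ _ _ _ _ _ r1 r2) -cblock_skewJ -/Mb.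
by rewrite !mulmxA WM mul1mx -mulmxA -trmx_mul WM trmx1 mulmx1.
Qed.

End KahanPoisson.

Section Smallness.
Variable R : numFieldType.

Lemma small_enough (e p q : R) : 0 < e -> 0 <= p -> 0 <= q ->
  exists2 d : R, 0 < d & forall t, 0 <= t -> t < d -> p * t <= 1 /\ q * t <= e.
Proof.
move=> e0 p0 q0.
have p1 : 0 < 1 + p by rewrite ltr_pwDl.
have eq0 : 0 < e + q by rewrite ltr_pwDl.
have le1 (r : R) : 0 <= r -> 1 <= 1 + r by move=> r0; rewrite lerDl.
exists ((1 + p)^-1 * (e / (e + q))) => [|t t0 td]; first by rewrite mulr_gt0 ?invr_gt0 ?divr_gt0.
have ed1 : e / (e + q) <= 1 by rewrite ler_pdivrMr // mul1r lerDl.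
have pd1 : (1 + p)^-1 <= 1 by rewrite invf_le1 // le1.
split.
- have : t * (1 + p) <= 1.
    rewrite -ler_pdivlMr // div1r ltW // (lt_le_trans td) //.
    by rewrite -[X in _ <= X]mulr1 ler_wpM2l // ltW // invr_gt0.
  by apply: le_trans; rewrite mulrC ler_wpM2l // lerDr.
- have : t * (e + q) <= e.
    rewrite -ler_pdivlMr // ltW // (lt_le_trans td) //.
    by rewrite -[X in _ <= X]mul1r ler_wpM2r // divr_ge0 // ltW.
  by apply: le_trans; rewrite mulrC ler_wpM2l // lerDr ltW.
Qed.

Lemma ler_absorb_half (a b q : R) : 0 <= a -> a <= b + q * a -> 2 * q <= 1 -> a <= 2 * b.
Proof.
move=> a0 aq q1.
have : 2 * a <= 2 * b + a.
  apply: le_trans (_ : 2 * (b + q * a) <= _); first by rewrite ler_wpM2l.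
  by rewrite mulrDr lerD2l mulrA -[X in _ <= X]mul1r ler_wpM2r.
by rewrite mulr2n mulrDl mul1r addrC lerD2r.
Qed.

End Smallness.

Section Norms.
Variables (R : numFieldType) (N : nat).
Implicit Types (h k : 'cV[R]_N) (A : 'M[R]_N).

Lemma vnorm_ge0 h : 0 <= vnorm h.
Proof. by apply: sumr_ge0 => i _; apply: normr_ge0. Qed.

Lemma vnormD h k : vnorm (h + k) <= vnorm h + vnorm k.
Proof. by rewrite /vnorm -big_split; apply: ler_sum => i _; rewrite mxE ler_normD. Qed.

Lemma vnormZ a h : vnorm (a *: h) = `|a| * vnorm h.
Proof. by rewrite /vnorm mulr_sumr; apply: eq_bigr => i _; rewrite mxE normrM. Qed.

Lemma vnorm_eq0 h : vnorm h = 0 -> h = 0.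
Proof.
move/eqP; rewrite psumr_eq0 => [/allP h0|i _]; last exact: normr_ge0.
apply/matrixP => i j; rewrite [j]ord1 mxE; apply/eqP.
by rewrite -normr_eq0 (implyP (h0 i (mem_index_enum i))).
Qed.

Lemma ler_coord_vnorm h j : `|h j 0| <= vnorm h.
Proof. by rewrite /vnorm (bigD1 j) //= ler_wpDr // sumr_ge0 // => i _; apply: normr_ge0. Qed.

Lemma vnorm_sum (I : finType) (F : I -> 'cV[R]_N) : vnorm (\sum_i F i) <= \sum_i vnorm (F i).
Proof.
elim/big_rec2: _ => [|i y1 y2 _ IH]; first by rewrite /vnorm big1 // => i _; rewrite mxE normr0.
by apply: le_trans (vnormD _ _) _; rewrite lerD2l.
Qed.

Definition mnorm A : R := \sum_i \sum_j `|A i j|.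

Lemma mnorm_ge0 A : 0 <= mnorm A.
Proof. by apply: sumr_ge0 => i _; apply: sumr_ge0 => j _; apply: normr_ge0. Qed.

Lemma vnorm_mulmx A h : vnorm (A *m h) <= mnorm A * vnorm h.
Proof.
rewrite /vnorm /mnorm mulr_suml; apply: ler_sum => i _; rewrite mxE mulr_suml.
apply: le_trans (ler_norm_sum _ _ _) _; apply: ler_sum => j _.
by rewrite normrM ler_wpM2l ?normr_ge0 // ler_coord_vnorm.
Qed.

Lemma sym_bilinear_bound (K : 'cV[R]_N -> 'M[R]_N) :
  (forall y z, K y *m z = K z *m y) ->
  exists2 c, 0 <= c & forall h k, vnorm (K h *m k) <= c * vnorm h * vnorm k.
Proof.
move=> Ksym; exists (\sum_l mnorm (K (delta_mx l 0))).
  by apply: sumr_ge0 => l _; apply: mnorm_ge0.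
move=> h k; have hE : h = \sum_l h l 0 *: delta_mx l 0.
  by rewrite {1}[h]matrix_sum_delta; apply: eq_bigr => l _; rewrite big_ord1.
rewrite Ksym {1}hE mulmx_sumr; apply: le_trans (vnorm_sum _) _.
rewrite !mulr_suml; apply: ler_sum => l _; rewrite -scalemxAr vnormZ -Ksym.
rewrite (mulrAC (mnorm _)) (mulrC (_ * vnorm k)); apply: ler_pM; rewrite ?normr_ge0 ?vnorm_ge0 //.
  exact: ler_coord_vnorm.
exact: vnorm_mulmx.
Qed.

End Norms.

Section KahanJacobian.
Variables (R : numFieldType) (N : nat) (K : 'cV[R]_N -> 'M[R]_N) (eps cK : R) (x : 'cV[R]_N).
Hypothesis K_sym : forall y z, K y *m z = K z *m y.
Hypothesis cK_ge0 : 0 <= cK.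
Hypothesis K_bound : forall h k, vnorm (K h *m k) <= cK * vnorm h * vnorm k.
Hypothesis M_unit : 1%:M - eps *: K x \in unitmx.

Local Notation M y := (1%:M - eps *: K y).
Local Notation W := (invmx (M x)).
Local Notation xt := (W *m x).
Local Notation D := (W *m (1%:M + eps *: K xt)).
Let c := `|eps| * mnorm W * cK.

Lemma K_additive y z : K (y + z) = K y + K z.
Proof. by apply: mulmx_colP => w; rewrite mulmxDl !(K_sym _ w) mulmxDr. Qed.

Lemma c_ge0 : 0 <= c.
Proof. by rewrite !mulr_ge0 ?normr_ge0 ?mnorm_ge0. Qed.

Lemma WK_bound h v : vnorm (eps *: (W *m (K h *m v))) <= c * vnorm h * vnorm v.
Proof.
rewrite vnormZ -!mulrA ler_wpM2l ?normr_ge0 //.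
by apply: le_trans (vnorm_mulmx _ _) _; rewrite ler_wpM2l ?mnorm_ge0 // mulrA.
Qed.

Lemma M_sub y h : M (y + h) = M y - eps *: K h.
Proof. by rewrite K_additive scalerDr opprD addrA. Qed.

Lemma perturbed_unit h : 2 * (c * vnorm h) <= 1 -> M (x + h) \in unitmx.
Proof.
move=> small; rewrite -unitmx_tr -row_free_unit; apply: inj_row_free => w Mw0.
have {Mw0} Mw0 : M (x + h) *m w^T = 0.
  by have := congr1 trmx Mw0; rewrite trmx_mul trmxK trmx0.
have wE : w^T = eps *: (W *m (K h *m w^T)).
  rewrite -{1}[w^T](mulKmx M_unit) scalemxAr; congr (W *m _).
  by move: Mw0; rewrite M_sub mulmxBl -scalemxAl => /subr0_eq.
have : vnorm w^T <= 2 * 0.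
  apply: (ler_absorb_half (vnorm_ge0 _) _ small); rewrite add0r.
  by rewrite {1}wE (le_trans (WK_bound _ _)) // mulrA.
rewrite mulr0 => w_le0.
have /vnorm_eq0 /(congr1 trmx) : vnorm w^T = 0 by apply/eqP; rewrite eq_le w_le0 vnorm_ge0.
by rewrite trmxK trmx0.
Qed.

Lemma kahan_increment h : M (x + h) \in unitmx ->
  let del := invmx (M (x + h)) *m (x + h) - xt in
  del - D *m h = eps *: (W *m (K h *m del)).
Proof.
move=> Mh_unit del; set xt' := invmx (M (x + h)) *m (x + h).
have Mxt' : M (x + h) *m xt' = x + h by rewrite mulKVmx.
have Mdel : M x *m del = h + eps *: (K h *m xt').
  have := Mxt'; rewrite M_sub mulmxBl -scalemxAl => /(canRL (subrK _)) Mxt.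
  by rewrite mulmxBr mulKVmx // Mxt addrAC [x + h]addrC addrK.
have DhE : D *m h = W *m h + eps *: (W *m (K h *m xt)).
  by rewrite -mulmxA mulmxDl mul1mx -scalemxAl K_sym mulmxDr -scalemxAr.
rewrite -[del in LHS](mulKmx M_unit) Mdel DhE mulmxDr -scalemxAr.
rewrite -{1}[xt'](subrK xt) -/del mulmxDr mulmxDr scalerDr.
by rewrite addrCA addrK.
Qed.

Lemma kahan_jacobian_at : is_jacobian (fun y => invmx (M y) *m y) x D.
Proof.
move=> e e0.
have [d d0 small] := small_enough e0 (mulr_ge0 (ler0n _ 2) c_ge0)
  (mulr_ge0 (mulr_ge0 (ler0n _ 2) c_ge0) (mnorm_ge0 D)).
exists d => // h hd; have [sm1 sm2] := small _ (vnorm_ge0 h) hd.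
rewrite -mulrA in sm1; rewrite /= -/(_ - xt).
have incr := kahan_increment (perturbed_unit sm1).
set del := _ - xt in incr *.
have del_bound : vnorm del <= 2 * (mnorm D * vnorm h).
  apply: ler_absorb_half (vnorm_ge0 _) _ sm1.
  rewrite -{1}[del](subrK (D *m h)) incr addrC.
  apply: le_trans (vnormD _ _) _; apply: lerD; first exact: vnorm_mulmx.
  exact: WK_bound.
rewrite incr; apply: le_trans (WK_bound _ _) _.
apply: le_trans (_ : c * vnorm h * (2 * (mnorm D * vnorm h)) <= _).
  by rewrite ler_wpM2l // mulr_ge0 ?c_ge0 ?vnorm_ge0.
have -> : c * vnorm h * (2 * (mnorm D * vnorm h)) = 2 * c * mnorm D * vnorm h * vnorm h.
  by ring.
by rewrite ler_wpM2r ?vnorm_ge0.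
Qed.

End KahanJacobian.

Lemma kahan_jacobian (R : numFieldType) N (K : 'cV[R]_N -> 'M[R]_N) eps x :
  (forall y z, K y *m z = K z *m y) -> 1%:M - eps *: K x \in unitmx ->
  let W := invmx (1%:M - eps *: K x) in
  is_jacobian (fun y => invmx (1%:M - eps *: K y) *m y) x
    (W *m (1%:M + eps *: K (W *m x))).
Proof.
move=> K_sym M_unit W; have [cK cK0 K_bound] := sym_bilinear_bound K_sym.
exact: kahan_jacobian_at K_sym cK0 K_bound M_unit.
Qed.

Lemma has_pderiv_cubic (R : numFieldType) N (phi : 'cV[R]_N -> R) x l (P Q A B : R) :
  (forall t, phi (x + t *: evec R l) = P + t * Q + t ^+ 2 * A + t ^+ 3 * B) ->
  has_pderiv phi x l Q.
Proof.
move=> phiE e e0.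
have -> : phi x = P by have := phiE 0; rewrite scale0r addr0 !(mul0r, expr0n) !addr0.
have [d d0 small] := small_enough e0 ler01 (addr_ge0 (normr_ge0 A) (normr_ge0 B)).
exists d => // t td; have [t1 tAB] := small _ (normr_ge0 t) td; rewrite mul1r in t1.
have -> : phi (x + t *: evec R l) - P - t * Q = t * (t * (A + t * B)).
  by rewrite phiE; ring.
rewrite normrM [e * _]mulrC ler_wpM2l // normrM (le_trans _ tAB) // [_ * `|t|]mulrC.
rewrite ler_wpM2l //.
apply: le_trans (ler_normD _ _) _; rewrite lerD2l normrM.
by rewrite -[X in _ <= X]mul1r ler_wpM2r.
Qed.

Section PoissonTensor.
Variables (R : numFieldType) (m : nat).
Local Notation n := m.+2.
Local Notation G := (gralg R m).
Local Notation gscalar := (@gscalar R m).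
Implicit Types (w psi : G).

Lemma skewJ_ll w i j : skewJ w (lshift n i) (lshift n j) = 0.
Proof. by rewrite block_mxEul mxE. Qed.
Lemma skewJ_lr w i j : skewJ w (lshift n i) (rshift n j) = w (i + j) 0.
Proof. by rewrite block_mxEur hankelE. Qed.
Lemma skewJ_rl w i j : skewJ w (rshift n i) (lshift n j) = - w (i + j) 0.
Proof. by rewrite block_mxEdl mxE hankelE. Qed.
Lemma skewJ_rr w i j : skewJ w (rshift n i) (rshift n j) = 0.
Proof. by rewrite block_mxEdr mxE. Qed.

Lemma usubmx_evec_l (l : 'I_n) : usubmx (evec R (lshift n l)) = delta_mx l 0 :> G.
Proof. by apply/matrixP => i j; rewrite !mxE eq_lshift. Qed.
Lemma usubmx_evec_r (l : 'I_n) : usubmx (evec R (rshift n l)) = 0 :> G.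
Proof. by apply/matrixP => i j; rewrite !mxE eq_lrshift. Qed.

Lemma delta_mulE (l p : 'I_n) psi : ((delta_mx l 0 : G) * psi) p 0 = psi (p - l) 0.
Proof. by rewrite mulrC gralg_mulE -colE !mxE. Qed.

Lemma sum_conv_shift (a b : 'I_n) (f g : 'I_n -> R) :
  \sum_l f (a + l) * g (b - l) = \sum_l f l * g (a + b - l).
Proof.
rewrite (reindex_inj (addrI (- a))) /=; apply: eq_bigr => l _.
by congr (f _ * g _); ring.
Qed.

(* [dP l] is the derivative of [skewJ (phi x)] along [x_l] when [phi] depends on [usubmx x]
   only, with derivative multiplication by [psi]; each cyclic sum then splits into two
   convolutions that agree after reindexing. *)
Lemma skewJ_jacobi w psi (i j k : 'I_(n + n)) :
  let dP l := skewJ ((usubmx (evec R l) : G) * psi) in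
  \sum_(l < n + n) (skewJ w i l * dP l j k + skewJ w j l * dP l k i + skewJ w k l * dP l i j) = 0.
Proof.
move=> dP; rewrite big_split_ord /= [X in _ + X]big1 ?addr0 => [|l _]; last first.
  by rewrite /dP usubmx_evec_r mul0r skewJ0 !mxE !mulr0 !addr0.
under eq_bigr => l _ do rewrite /dP usubmx_evec_l.
rewrite -(splitK i) -(splitK j) -(splitK k).
case: (split i) => i'; case: (split j) => j'; case: (split k) => k' /=;
  under eq_bigr => l _ do
    rewrite ?(skewJ_ll, skewJ_lr, skewJ_rl, skewJ_rr) ?delta_mulE ?mulr0 ?mul0r ?addr0 ?add0r.
all: try by rewrite big1.
all: under eq_bigr => l _ do rewrite ?mulNr ?mulrN ?opprK.
all: rewrite big_split /= sumrN; apply/eqP; rewrite ?subr_eq0 ?addr_eq0 ?opprK; apply/eqP.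
all: rewrite !(sum_conv_shift _ _ (fun p => w p 0) (fun p => psi p 0)).
all: try congr (- _).
all: by apply: eq_bigr => l _; congr (_ * psi (_ - _) 0); ring.
Qed.

Lemma PiT_hblock_poisson_tensor eps (a b c : G) : poisson_tensor (PiT eps (hblock a b c)).
Proof.
split=> [x|x]; first by rewrite PiT_hblock tr_skewJ.
set u : G := usubmx x; set k3 := gscalar (eps ^+ 2) * hdisc a b c.
set psi := 1 + 3 * k3 * u ^+ 2.
exists (fun l => skewJ ((usubmx (evec R l) : G) * psi)); split=> [l i j|i j k]; last first.
  by rewrite PiT_hblock skewJ_jacobi.
set d : G := usubmx (evec R l).
apply: (has_pderiv_cubic (A := skewJ (3 * k3 * u * d ^+ 2) i j) (B := skewJ (k3 * d ^+ 3) i j))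
  => t; rewrite PiT_hblock.
have -> : pi_coeff eps a b c (usubmx (x + t *: evec R l)) = pi_coeff eps a b c u +
    gscalar t * (d * psi) + gscalar (t ^+ 2) * (3 * k3 * u * d ^+ 2) +
    gscalar (t ^+ 3) * (k3 * d ^+ 3).
  by rewrite linearD linearZ /= scale_gralg /pi_coeff -/u -/d /psi -/k3 !exprS expr0 !mulr1 !gscalarM;
    gralg_ring R m.
by rewrite !skewJD !skewJ_gscalar !mxE.
Qed.

End PoissonTensor.

Section Admissible.
Variables (R : numFieldType) (m : nat).
Local Notation n := m.+2.
Local Notation G := (gralg R m).
Local Notation gscalar := (@gscalar R m).

Lemma val_addr1 (i : 'I_n) : val (i + 1) = (i.+1 %% n)%N.
Proof. by rewrite /= [(1 %% _)%N]modn_small // addn1. Qed.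

Lemma Pshift_mulmxE (Y : 'M[R]_n) i j : (Pshift R n *m Y) i j = Y (i + 1) j.
Proof.
rewrite mxE (bigD1 (i + 1)) //= big1 ?addr0 => [|k kn]; first by rewrite mxE val_addr1 eqxx mul1r.
rewrite mxE; case: eqP => [ik|]; last by rewrite mul0r.
by case/eqP: kn; apply: val_inj; rewrite val_addr1.
Qed.

Lemma mulmx_trPshiftE (Y : 'M[R]_n) i j : (Y *m (Pshift R n)^T) i j = Y i (j + 1).
Proof.
rewrite mxE (bigD1 (j + 1)) //= big1 ?addr0 => [|k kn]; first by rewrite !mxE val_addr1 eqxx mulr1.
rewrite !mxE; case: eqP => [jk|]; last by rewrite mulr0.
by case/eqP: kn; apply: val_inj; rewrite val_addr1.
Qed.

(* Intertwining the cyclic shift with its transpose forces [Y (i + 1) j = Y i (j + 1)]. *)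
Lemma hankel_of_Pshift (Y : 'M[R]_n) :
  Pshift R n *m Y = Y *m (Pshift R n)^T -> Y = hankel (\col_i Y i 0).
Proof.
move=> PY; have shift i j : Y (i + 1) j = Y i (j + 1).
  by rewrite -Pshift_mulmxE PY mulmx_trPshiftE.
have shiftn k i : Y i (inZp k) = Y (i + inZp k) 0.
  elim: k i => [|k IHk] i.
    by congr (Y _ _); apply: val_inj; rewrite /= ?addr0 // addn0 modn_small.
  have -> : inZp k.+1 = inZp k + 1 :> 'I_n.
    by apply: val_inj; rewrite /= [(1 %% _)%N]modn_small // modnDml addn1.
  by rewrite -shift IHk addrAC addrA.
by apply/matrixP => i j; rewrite hankelE mxE -[j in LHS]valZpK shiftn valZpK.
Qed.

Lemma admissible_hblock (Hc : 'M[R]_(n + n)) :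
  Hc^T = Hc -> Amat R n *m Hc = Hc *m (Amat R n)^T -> exists a b c, Hc = hblock a b c.
Proof.
rewrite -(submxK Hc) /Amat !tr_block_mx !trmx0 !mulmx_block => /eq_block_mx [_ _ sym21 _].
rewrite !mul0mx !mulmx0 !addr0 !add0r => /eq_block_mx [P11 P12 _ P22].
exists (\col_i ulsubmx Hc i 0), (\col_i ursubmx Hc i 0), (\col_i drsubmx Hc i 0).
rewrite /hblock -(hankel_of_Pshift P11) -(hankel_of_Pshift P12) -(hankel_of_Pshift P22).
by rewrite -sym21 (hankel_of_Pshift P12) tr_hankel.
Qed.

Definition gshift : G := delta_mx (-1) 0.

Lemma Pshift_circ : Pshift R n = circ gshift.
Proof.
apply/matrixP => i j; rewrite !mxE eqxx andbT; congr (nat_of_bool _)%:R.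
apply/idP/idP => /eqP ij; apply/eqP.
  have -> : j = i + 1 by apply: val_inj; rewrite val_addr1.
  by rewrite opprD addrA subrr add0r.
have -> : j = i + 1 by rewrite -[j](subKr i) ij opprK.
by rewrite val_addr1.
Qed.

Definition circ_diag (s : G) : 'M[R]_(n + n) := block_mx (circ s) 0 0 (circ s).

Lemma circ_diagD s t : circ_diag (s + t) = circ_diag s + circ_diag t.
Proof. by rewrite /circ_diag add_block_mx circD !addr0. Qed.

Lemma mxpow_Amat k : mxpow (Amat R n) k = circ_diag (gshift ^+ k).
Proof.
elim: k => [|k IHk]; first by rewrite /mxpow /circ_diag /= (scalar_mx_block n n) expr0 circ1.
rewrite /mxpow iterS -/(mxpow _ k) IHk /Amat mulmx_block !mul0mx !mulmx0 !addr0 !add0r.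
by rewrite Pshift_circ -circM -exprS.
Qed.

Lemma sum_mxpow_Amat (alpha : 'I_n -> R) :
  \sum_(i < n) alpha i *: mxpow (Amat R n) i =
  circ_diag (\sum_(i < n) gscalar (alpha i) * gshift ^+ i).
Proof.
have circ_diag0 : circ_diag 0 = 0 by rewrite /circ_diag circ0 block_mx0.
rewrite (big_morph circ_diag circ_diagD circ_diag0); apply: eq_bigr => i _.
by rewrite mxpow_Amat scale_block_mx !scaler0 scale_circ.
Qed.

Lemma circ_diag_square1 (s : G) : circ_diag s *m circ_diag s = 1%:M -> s * s = 1.
Proof.
rewrite mulmx_block (scalar_mx_block n n) => /eq_block_mx [ss _ _ _].
move: ss; rewrite mulmx0 addr0 -circM => /(congr1 (mulmx^~ (gunit R m))).
by rewrite circ_mul_gunit mul1mx.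
Qed.

Lemma circ_diag_hblock (s a b c : G) :
  circ_diag s *m hblock a b c = hblock (s * a) (s * b) (s * c).
Proof. by rewrite mulmx_block !mul0mx !addr0 !add0r !circ_mul_hankel. Qed.

Lemma assocvf_circ_diag (s a b c : G) :
  assocvf (circ_diag s) (hblock a b c) =1 hamvf (hblock (s * a) (s * b) (s * c)).
Proof. by move=> z; rewrite /assocvf /hamvf -circ_diag_hblock !mulmxA. Qed.

(* [pi_coeff] sees [s a, s b, s c] only through [hdisc], which gets multiplied by [(s s)^*]. *)
Lemma PiT_hblock_unit_square eps (s a b c : G) x : s * s = 1 ->
  PiT eps (hblock (s * a) (s * b) (s * c)) x = PiT eps (hblock a b c) x.
Proof.
move=> ss1; rewrite !PiT_hblock /pi_coeff /hdisc !antipodeM.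
have -> : antipode s * antipode a * (antipode s * antipode c) - (antipode s * antipode b) ^+ 2
    = antipode (s * s) * (antipode a * antipode c - antipode b ^+ 2).
  by rewrite antipodeM; gralg_ring R m.
by rewrite ss1 antipode1 mul1r.
Qed.

End Admissible.

Lemma eq_qjac (R : numFieldType) N (f1 f2 : 'cV[R]_N -> 'cV[R]_N) :
  f1 =1 f2 -> qjac f1 =1 qjac f2.
Proof. by move=> f12 y; apply/matrixP => i j; rewrite !mxE !f12. Qed.

Lemma eq_poisson_map (R : numFieldType) N (Pi1 Pi2 : 'cV[R]_N -> 'M[R]_N)
    (F1 F2 : 'cV[R]_N -> 'cV[R]_N) (dom1 dom2 : 'cV[R]_N -> bool) :
  Pi1 =1 Pi2 -> F1 =1 F2 -> dom1 =1 dom2 -> poisson_map Pi1 F1 dom1 -> poisson_map Pi2 F2 dom2.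
Proof.
move=> Pi12 F12 dom12 PF1 x; rewrite -dom12 => /PF1 [D [JD PD]]; exists D; split.
  by move=> e /JD [d d0 Jd]; exists d => // h /Jd; rewrite -!F12.
by rewrite -!Pi12 -F12.
Qed.

Lemma kahan_hblock_poisson_map (R : numFieldType) m eps (a b c : gralg R m) :
  poisson_map (PiT eps (hblock a b c)) (kahan (hamvf (hblock a b c)) eps)
    (kahan_defined (hamvf (hblock a b c)) eps).
Proof.
move=> x Mx; eexists; split; last exact: kahan_hblock_poisson Mx.
exact: kahan_jacobian (@qjac_hblock_sym _ _ a b c) Mx.
Qed.

Theorem mainTheorem3 (R : numFieldType) (n : nat) (hn : (2 <= n)%N)
  (Hc : 'M[R]_(n + n)) (hsym : Hc^T = Hc)
  (hadm : Amat R n *m Hc = Hc *m (Amat R n)^T)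
  (alpha : 'I_n -> R)
  (hB : (\sum_(i < n) alpha i *: mxpow (Amat R n) i) *m
        (\sum_(i < n) alpha i *: mxpow (Amat R n) i) = 1%:M)
  (eps : R) :
  let B := \sum_(i < n) alpha i *: mxpow (Amat R n) i in
  let f := hamvf Hc in
  let g := assocvf B Hc in
  let Pi := PiT eps Hc in
  poisson_tensor Pi /\
  poisson_map Pi (kahan f eps) (kahan_defined f eps) /\
  poisson_map Pi (kahan g eps) (kahan_defined g eps).
Proof.
case: n hn Hc hsym hadm alpha hB => [|[|m]] // _ Hc hsym hadm alpha hB B f g Pi.
have [a [b [c Hc_eq]]] := admissible_hblock hsym hadm; subst Hc.
move: hB; rewrite /B sum_mxpow_Amat; set s := \sum_(i < _) _ => /circ_diag_square1 ss1.
have gE : hamvf (hblock (s * a) (s * b) (s * c)) =1 g.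
  by move=> z; rewrite /g /B sum_mxpow_Amat -/s assocvf_circ_diag.
split; first exact: PiT_hblock_poisson_tensor.
split; first exact: kahan_hblock_poisson_map.
apply: eq_poisson_map (kahan_hblock_poisson_map (eps := eps) (a := s * a) (b := s * b) (c := s * c)).
- by move=> y; rewrite PiT_hblock_unit_square.
- by move=> y; rewrite /kahan (eq_qjac gE).
- by move=> y; rewrite /kahan_defined (eq_qjac gE).
Qed.
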